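(* Let $I\unlhd K[x_1,\dots,x_n]$ be a homogeneous ideal and let $w\in\mathbb R^n$. Let $G$ be an initially reduced standard basis of $\pi^{-1}I$ with respect to the weighted ordering $>_{(-1,w)}$. Then $$\{\overline{\operatorname{in}_{(-1,w)}(g)}|_{t=1}:g\in G\}$$ is a standard basis of $\operatorname{in}_{\nu,w}(I)$ with respect to the lexicographical ordering $x_1>\dots>x_n$, i.e. the restriction of $>$ to monomials in $x$.
   Context: Let $K$ be a complete field with a non-trivial discrete valuation $\nu$ (with $\nu(p)=1$) and a uniformizing parameter $p$. Let $\mathcal O_K$ be its ring of integers and $\mathfrak K$ its residue field. Let $R\subseteq\mathcal O_K$ be a dense noetherian subring with $p\in R$. The map $\pi:R[[t]][x]\to\mathcal O_K[x]\subseteq K[x]$ sends $t\mapsto p$, and $\pi^{-1}I$ is the preimage. For $f=\sum_\alpha c_\alpha x^\alpha\in K[x]$, $\operatorname{in}_{\nu,w}(f)=\sum\overline{c_\alpha p^{-\nu(c_\alpha)}}x^\alpha$, summed over the $\alpha$ with $c_\alpha\ne0$ and $w\cdot\alpha-\nu(c_\alpha)$ maximal. $\operatorname{in}_{\nu,w}(I)\unlhd\mathfrak K[x]$ is generated by these initial forms. For $f=\sum c_{\alpha,\beta}t^\beta x^\alpha\in R[[t]][x]$ and $u\in\mathbb R_{<0}\times\mathbb R^n$, $\operatorname{in}_u(f)\in R[t,x]$ is the sum of the terms with $u\cdot(\beta,\alpha)$ maximal. For $h\in R[t,x]$, $\overline h|_{t=1}\in\mathfrak K[x]$ is obtained by reducing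 the coefficients to $\mathfrak K$ and setting $t=1$. Let $>$ be the $t$-local lexicographical monomial ordering on monomials $t^\beta x^\alpha$ with $x_1>\dots>x_n>1>t$. For $u\in\mathbb R_{<0}\times\mathbb R^n$, the weighted ordering is defined by $t^\beta x^\alpha>_u t^\delta x^\gamma$ iff $u\cdot(\beta,\alpha)>u\cdot(\delta,\gamma)$, or the two weights are equal and $t^\beta x^\alpha>t^\delta x^\gamma$. The leading term $\operatorname{lt}_{>_u}(g)$ of $g\in R[[t]][x]$ is its term with $>_u$-maximal monomial. A finite subset $G$ of an ideal $J$ is a standard basis with respect to $>_u$ if its leading terms generate the ideal generated by the leading terms of all elements of $J$. Write $G=\{g_1,\dots,g_k\}$ with $g_i=\sum_\alpha g_{i,\alpha}x^\alpha$ and $g_{i,\alpha}\in R[[t]]$. Then $G$ is initially reduced if the set $\{\sum_\alpha\operatorname{lt}_>(g_{i,\alpha})x^\alpha: i=1,\dots,k\}\subseteq R[t,x]$ is reduced in the classical (Gröbner basis) sense. *)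

From HB Require Import structures.
From mathcomp Require Import all_boot all_order all_algebra.
From mathcomp Require Import reals.
From Stdlib Require List.
Set Implicit Arguments. Unset Strict Implicit. Unset Printing Implicit Defensive.
Import Order.TTheory GRing.Theory Num.Theory.
Local Open Scope ring_scope.

(* Monomials t^beta x^alpha are encoded as pairs (alpha, beta).        *)
Definition mono (n : nat) := {ffun 'I_n -> nat}.

Section Monomials.
Variable n : nat.
Definition mdiv (a b : mono n) : bool := [forall i, (a i <= b i)%N].
Definition msub (b a : mono n) : mono n := [ffun i => (b i - a i)%N].
Definition mdeg (a : mono n) : nat := (\sum_(i < n) a i)%N.
(* lexicographic ordering x_1 > ... > x_n (index 0 is x_1): a >lex b *)
Definition lex_gt (a b : mono n) : Prop :=
  exists i : 'I_n, (b i < a i)%N /\ forall j : 'I_n, (j < i)%N -> a j = b j.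
(* the t-local lexicographical ordering  x_1 > ... > x_n > 1 > t  on t^beta x^alpha *)
Definition loc_gt (m m' : mono n * nat) : Prop :=
  lex_gt m.1 m'.1 \/ (m.1 = m'.1 /\ (m.2 < m'.2)%N).
Definition tmdiv (m m' : mono n * nat) : bool := mdiv m.1 m'.1 && (m.2 <= m'.2)%N.
Definition tmsub (m' m : mono n * nat) : mono n * nat := (msub m'.1 m.1, (m'.2 - m.2)%N).
End Monomials.

(* dv m m' : monomial m divides m';  sb m' m : the quotient m'/m.      *)
Section Generic.
Variables (T : eqType) (A : nzRingType).

Definition fsupp (f : T -> A) : Prop :=
  exists s : seq T, forall m, m \notin s -> f m = 0.

Definition is_lead (gt : T -> T -> Prop) (f l : T -> A) : Prop :=
  ((forall m, f m = 0) /\ (forall m, l m = 0)) \/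
  exists m, f m != 0 /\ (forall m', f m' != 0 -> m' = m \/ gt m m') /\
     (forall m', l m' = if m' == m then f m else 0).

Definition tmul (dv : T -> T -> bool) (sb : T -> T -> T) (c : A) (m : T) (f : T -> A)
  : T -> A := fun m' => if dv m m' then c * f (sb m' m) else 0.

Definition ideal_gen dv sb (C : A -> Prop) (S : (T -> A) -> Prop) (h : T -> A) : Prop :=
  exists l : seq (A * T * (T -> A)),
    (forall x, List.In x l -> C x.1.1 /\ S x.2) /\
    forall m, h m = \sum_(x <- l) tmul dv sb x.1.1 x.1.2 x.2 m.

Definition std_basis dv sb (C : A -> Prop) (gt : T -> T -> Prop)
  (J : (T -> A) -> Prop) (G : seq (T -> A)) : Prop :=
  (forall g, List.In g G -> J g) /\
  forall h, ideal_gen dv sb C (fun l => exists g, List.In g G /\ is_lead gt g l) h <->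
            ideal_gen dv sb C (fun l => exists f, J f /\ is_lead gt f l) h.
End Generic.

(* nu : K -> int; its value at 0 (conventionally +oo) is never used.   *)
Section Valued.
Variables (K : fieldType) (nu : K -> int) (p : K).

Definition OK (x : K) : Prop := x = 0 \/ 0 <= nu x.
Definition vclose (N : int) (x y : K) : Prop := x = y \/ N <= nu (x - y).
Definition vconv (s : nat -> K) (y : K) : Prop :=
  forall N : int, exists M, forall m, (M <= m)%N -> vclose N (s m) y.
Definition vcauchy (s : nat -> K) : Prop :=
  forall N : int, exists M, forall m m', (M <= m)%N -> (M <= m')%N -> vclose N (s m) (s m').

Definition complete_dvf : Prop :=
  [/\ forall x y, x != 0 -> y != 0 -> nu (x * y) = nu x + nu y,
      forall x y, x != 0 -> y != 0 -> x + y != 0 ->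
         (nu x <= nu (x + y)) || (nu y <= nu (x + y)),
      p != 0 /\ nu p = 1 &
      forall s, vcauchy s -> exists y, vconv s y].

Definition residue_map (kk : fieldType) (res : K -> kk) : Prop :=
  [/\ forall x y, OK x -> OK y -> res (x + y) = res x + res y,
      forall x y, OK x -> OK y -> res (x * y) = res x * res y,
      res 1 = 1,
      forall x, OK x -> (res x = 0 <-> (x = 0 \/ 0 < nu x)) &
      forall k, exists x, OK x /\ res x = k].

Definition R_ideal (R J : K -> Prop) : Prop :=
  [/\ forall x, J x -> R x, J 0, forall x y, J x -> J y -> J (x + y) &
      forall r x, R r -> J x -> J (r * x)].
Definition fin_gen (R J : K -> Prop) : Prop :=
  exists s : seq K, (forall x, List.In x s -> J x) /\
    forall x, J x -> exists cs : seq K, (forall c, List.In c cs -> R c) /\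
       size cs = size s /\ x = \sum_(i < size s) cs`_i * s`_i.

Definition good_subring (R : K -> Prop) : Prop :=
  [/\ R 0 /\ R 1 /\ (forall x y, R x -> R y -> R (x - y)) /\
        (forall x y, R x -> R y -> R (x * y)),
      (forall x, R x -> OK x) /\ R p,
      forall x N, OK x -> exists r, R r /\ vclose N x r &
      forall J, R_ideal R J -> fin_gen R J].

(* elements of R[[t]][x] : functions (alpha, beta) |-> coefficient of t^beta x^alpha *)
Definition in_RtX (R : K -> Prop) n (f : mono n * nat -> K) : Prop :=
  (forall m, R (f m)) /\
  exists s : seq (mono n), forall a b, a \notin s -> f (a, b) = 0.

(* pi : R[[t]][x] -> O_K[x], t |-> p *)
Definition pi_rel n (f : mono n * nat -> K) (F : mono n -> K) : Prop :=
  forall a, vconv (fun N => \sum_(b < N) f (a, nat_of_ord b) * p ^+ b) (F a).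

Definition pi_pre (R : K -> Prop) n (I : (mono n -> K) -> Prop) (f : mono n * nat -> K) : Prop :=
  in_RtX R f /\ exists F, pi_rel f F /\ I F.

Definition poly_ideal n (I : (mono n -> K) -> Prop) : Prop :=
  [/\ forall f, I f -> fsupp f, I (fun _ => 0),
      forall f g, I f -> I g -> I (fun a => f a + g a) &
      forall c a f, I f -> I (tmul (@mdiv n) (@msub n) c a f)].
Definition homog_ideal n (I : (mono n -> K) -> Prop) : Prop :=
  poly_ideal I /\
  forall f d, I f -> I (fun a => if mdeg a == d then f a else 0).

Variable Rt : realType.
Definition wdot n (w : 'I_n -> Rt) (a : mono n) : Rt := \sum_i w i * (a i)%:R.

Definition init_nu n (kk : fieldType) (res : K -> kk) (w : 'I_n -> Rt)
  (f : mono n -> K) (F : mono n -> kk) : Prop :=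
  exists M : Rt,
   (forall a, f a != 0 -> wdot w a - (nu (f a))%:~R <= M) /\
   ((forall a, f a = 0) \/ exists a, f a != 0 /\ wdot w a - (nu (f a))%:~R = M) /\
   forall a, F a = if (f a != 0) && (wdot w a - (nu (f a))%:~R == M)
                   then res (f a * p ^ (- nu (f a))) else 0.

Definition init_nu_ideal n (kk : fieldType) (res : K -> kk) (w : 'I_n -> Rt)
  (I : (mono n -> K) -> Prop) : (mono n -> kk) -> Prop :=
  ideal_gen (@mdiv n) (@msub n) (fun _ => True)
            (fun F0 => exists f, I f /\ init_nu res w f F0).

Definition wt_u n (w : 'I_n -> Rt) (m : mono n * nat) : Rt := wdot w m.1 - (m.2)%:R.

Definition init_u n (w : 'I_n -> Rt) (f h : mono n * nat -> K) : Prop :=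
  exists M : Rt,
   (forall m, f m != 0 -> wt_u w m <= M) /\
   ((forall m, f m = 0) \/ exists m, f m != 0 /\ wt_u w m = M) /\
   forall m, h m = if wt_u w m == M then f m else 0.

Definition gt_u n (w : 'I_n -> Rt) (m m' : mono n * nat) : Prop :=
  wt_u w m' < wt_u w m \/ (wt_u w m = wt_u w m' /\ loc_gt m m').

Definition t_one n (kk : fieldType) (res : K -> kk) (h : mono n * nat -> K)
  (F : mono n -> kk) : Prop :=
  exists N, (forall a b, (N <= b)%N -> h (a, b) = 0) /\
            forall a, F a = \sum_(b < N) res (h (a, nat_of_ord b)).
End Valued.

(* h = sum_alpha lt_>(g_alpha) x^alpha *)
Definition tlead_part (K : fieldType) n (g h : mono n * nat -> K) : Prop :=
  forall a,
  ((forall b, g (a, b) = 0) /\ forall b, h (a, b) = 0) \/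
  exists b, g (a, b) != 0 /\ (forall b', (b' < b)%N -> g (a, b') = 0) /\
            forall b', h (a, b') = if b' == b then g (a, b) else 0.

Definition reduced_set (K : fieldType) (R : K -> Prop) n (H : seq (mono n * nat -> K)) : Prop :=
  forall h h', List.In h H -> List.In h' H -> ~ (forall m, h m = h' m) ->
    forall l, is_lead (@loc_gt n) h l ->
    forall m m', l m != 0 -> h' m' != 0 ->
      ~ (tmdiv m m' /\ exists r, R r /\ h' m' = r * l m).

Definition init_reduced (K : fieldType) (R : K -> Prop) n (G : seq (mono n * nat -> K)) : Prop :=
  forall H, List.Forall2 (@tlead_part K n) G H -> reduced_set R H.

From HB Require Import structures.
From mathcomp Require Import all_boot all_order all_algebra.
From mathcomp Require Import reals.
From mathcomp Require Import zify ring lra.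
From Stdlib Require List.
From Stdlib Require Import ClassicalEpsilon FunctionalExtensionality.
Set Implicit Arguments. Unset Strict Implicit. Unset Printing Implicit Defensive.
Import Order.TTheory GRing.Theory Num.Theory.
Local Open Scope ring_scope.

(* For g in pi^-1 I with image F = pi(g), each term c t^b x^a of g contributes c p^b, of
   valuation at least b, to the coefficient F_a.  If M is the largest (-1,w)-weight of a term
   of g, this gives nu(F_a) >= w.a - M, and the residue of the coefficient of t^b x^a with
   w.a - b = M decides whether equality holds.  So the reduction of in_(-1,w)(g)|_(t=1) is
   either 0 or in_(nu,w)(F), and a >_(-1,w)-leading term of g yields the lex-leading term of
   its image.
   Conversely, an element of in_(nu,w)(I) with lex-leading monomial a* comes from some H in I
   with nu(H_a) >= w.a - w.a*, a unit coefficient at a*, and equality only at monomials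
   lex-below a*.  Scaling H by a power p^k and expanding its coefficients p-adically with digits
   in R gives an element of pi^-1 I with leading term (unit) t^k x^a*.  As G is a standard
   basis, this term is an R-combination of leading terms of G; modulo p one of them keeps a unit
   coefficient, so its monomial divides t^k x^a*, and the image of that element of G has a
   leading monomial dividing x^a*. *)

Lemma Forall2_In_l (A B : Type) (P : A -> B -> Prop) l l' x :
  List.Forall2 P l l' -> List.In x l -> exists2 y, List.In y l' & P x y.
Proof.
elim=> [//|a b l1 l2 Pab _ IH] [<-|/IH [y l2y Pxy]]; first by exists b => //; left.
by exists y => //; right.
Qed.

Lemma Forall2_In_r (A B : Type) (P : A -> B -> Prop) l l' y :
  List.Forall2 P l l' -> List.In y l' -> exists2 x, List.In x l & P x y.
Proof. by move/List.Forall2_flip; apply: Forall2_In_l. Qed.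

Lemma big_ord_single (V : nmodType) (f : nat -> V) (N b0 : nat) :
  (forall b, b != b0 -> f b = 0) -> ((N <= b0)%N -> f b0 = 0) ->
  \sum_(b < N) f b = f b0.
Proof.
move=> f_supp f_b0; rewrite (bigID (fun b : 'I_N => b == b0 :> nat)) /= big_ord1_eq.
rewrite big1 => [|b /negP/negP]; last exact: f_supp.
by rewrite addr0; case: ltnP => // /f_b0.
Qed.

Section IdealGen.
Variables (T : eqType) (A : nzRingType) (dv : T -> T -> bool) (sb : T -> T -> T).
Variable C : A -> Prop.

Lemma ideal_gen_subst (S S' : (T -> A) -> Prop) h :
  (forall c m s, C c -> S s -> exists L' : seq (A * T * (T -> A)),
     (forall x, List.In x L' -> C x.1.1 /\ S' x.2) /\
     forall m', tmul dv sb c m s m' = \sum_(x <- L') tmul dv sb x.1.1 x.1.2 x.2 m') ->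
  ideal_gen dv sb C S h -> ideal_gen dv sb C S' h.
Proof.
move=> subst [L [L_S h_eq]]; elim: L h L_S h_eq => [|[[c m] s] L IH] h L_S h_eq.
  by exists [::]; split=> // m; rewrite h_eq !big_nil.
have [L1 [L1_S' hL1]] := IH _ (fun x Lx => L_S x (or_intror Lx)) (fun _ => erefl).
have [Cc Ss] := L_S _ (or_introl erefl).
have [L' [L'_S' hL']] := subst c m s Cc Ss.
exists (L' ++ L1); split=> [x /(@List.in_app_or _ L' L1 x) [/L'_S'|/L1_S'] //|m'].
by rewrite h_eq big_cons big_cat /= hL' hL1.
Qed.

Lemma ideal_gen_sub (S S' : (T -> A) -> Prop) h :
  (forall s, S s -> S' s) -> ideal_gen dv sb C S h -> ideal_gen dv sb C S' h.
Proof.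
move=> sub_SS'; apply: ideal_gen_subst => c m s Cc Ss.
exists [:: (c, m, s)]; split=> [x [<-|//]|m']; first by split=> //; apply: sub_SS'.
by rewrite big_cons big_nil addr0.
Qed.
End IdealGen.

Section Monomials.
Variable n : nat.

Definition mono0 : mono n := [ffun => 0%N].
Definition madd (a b : mono n) : mono n := [ffun i => (a i + b i)%N].

Lemma mdiv0 (a : mono n) : mdiv mono0 a.
Proof. by apply/forallP => i; rewrite ffunE. Qed.

Lemma msub0 (a : mono n) : msub a mono0 = a.
Proof. by apply/ffunP => i; rewrite !ffunE subn0. Qed.

Lemma mdiv_msub (a b : mono n) : mdiv (msub a b) a.
Proof. by apply/forallP => i; rewrite ffunE leq_subr. Qed.

Lemma mdiv_madd (a b : mono n) : mdiv a (madd a b).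
Proof. by apply/forallP => i; rewrite ffunE leq_addr. Qed.

Lemma msub_madd (a b : mono n) : msub (madd a b) a = b.
Proof. by apply/ffunP => i; rewrite !ffunE addKn. Qed.

Lemma madd_msub (a b : mono n) : mdiv a b -> madd a (msub b a) = b.
Proof. by move/forallP => le_ab; apply/ffunP => i; rewrite !ffunE subnKC. Qed.

Lemma madd_msubA (m a b : mono n) : mdiv b a -> madd (madd m (msub a b)) b = madd m a.
Proof. by move/forallP => le_ba; apply/ffunP => i; have := le_ba i; rewrite !ffunE; lia. Qed.

Lemma tmul_single (A : nzRingType) (c v : A) (m a : mono n) :
  tmul (@mdiv n) (@msub n) c m (fun b => if b == a then v else 0) =1
  fun b => if b == madd m a then c * v else 0.
Proof.
move=> b; rewrite /tmul; have [->|ne] := eqVneq b (madd m a).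
  by rewrite mdiv_madd msub_madd eqxx.
case: ifP => // m_b; case: eqP => [e|_]; last by rewrite mulr0.
by move: ne; rewrite -e madd_msub ?eqxx.
Qed.

Lemma wdot_msub {Rt : realType} {w : 'I_n -> Rt} (a m : mono n) :
  mdiv m a -> wdot w a = wdot w (msub a m) + wdot w m.
Proof.
move/forallP => le_ma; rewrite /wdot -big_split; apply: eq_bigr => i _.
by rewrite /msub ffunE /= -mulrDr -natrD subnK.
Qed.

Lemma wt_uE {Rt : realType} {w : 'I_n -> Rt} (a : mono n) (b : nat) :
  wt_u w (a, b) = wdot w a - b%:R.
Proof. by []. Qed.
End Monomials.
Arguments mono0 {n}.

Section Valuation.
Variables (K : fieldType) (nu : K -> int) (p : K).
Hypothesis nuM : forall x y : K, x != 0 -> y != 0 -> nu (x * y) = nu x + nu y.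
Hypothesis nu_ultra : forall x y : K, x != 0 -> y != 0 -> x + y != 0 ->
  (nu x <= nu (x + y)) || (nu y <= nu (x + y)).
Hypotheses (p_neq0 : p != 0) (nu_p : nu p = 1).

Lemma nu1 : nu 1 = 0.
Proof.
have one0 : (1 : K) != 0 := oner_neq0 K.
by have := nuM one0 one0; rewrite mulr1; lia.
Qed.

Lemma nuV x : x != 0 -> nu x^-1 = - nu x.
Proof.
by move=> x0; have := nuM x0 (invr_neq0 x0); rewrite mulfV // nu1; lia.
Qed.

Lemma nuN x : nu (- x) = nu x.
Proof.
have N1 : (-1 : K) != 0 by rewrite oppr_eq0 oner_neq0.
have nuN1 : nu (-1) = 0 by have := nuM N1 N1; rewrite mulrNN mulr1 nu1; lia.
have [->|x0] := eqVneq x 0; first by rewrite oppr0.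
by rewrite -mulN1r nuM // nuN1 add0r.
Qed.

Lemma pXz_neq0 (z : int) : p ^ z != 0.
Proof. by rewrite expfz_neq0. Qed.

Lemma nu_pX (k : nat) : nu (p ^+ k) = k.
Proof.
elim: k => [|k IH]; first by rewrite expr0 nu1.
by rewrite exprS nuM ?expf_neq0 // IH nu_p; lia.
Qed.

Lemma nu_pXz (z : int) : nu (p ^ z) = z.
Proof.
case: z => k; first by rewrite nu_pX.
by rewrite NegzE -exprnN nuV ?expf_neq0 // nu_pX.
Qed.

Lemma pXzD (a b : int) : p ^ (a + b) = p ^ a * p ^ b.
Proof. by rewrite expfzDr. Qed.

Variable Rt : realType.

(* [r <= nu x], where [nu 0] counts as [+oo]. *)
Definition val_ge (r : Rt) (x : K) : Prop := x = 0 \/ r <= (nu x)%:~R.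

Lemma val_ge0 r : val_ge r 0. Proof. by left. Qed.

Lemma val_ge_nu x : val_ge (nu x)%:~R x. Proof. by right. Qed.

Lemma val_ge_pXz (z : int) : val_ge z%:~R (p ^ z).
Proof. by right; rewrite nu_pXz. Qed.

Lemma val_ge_le r r' x : r' <= r -> val_ge r x -> val_ge r' x.
Proof. by move=> le_r'r [->|hx]; [left|right; apply: le_trans hx]. Qed.

Lemma OK_val_ge x : OK nu x <-> val_ge 0 x.
Proof. by rewrite /val_ge ler0z. Qed.

Lemma val_geD r x y : val_ge r x -> val_ge r y -> val_ge r (x + y).
Proof.
move=> [->|hx]; first by rewrite add0r.
move=> [->|hy]; first by rewrite addr0; right.
have [xy0|xy0] := eqVneq (x + y) 0; first by left.
have [->|x0] := eqVneq x 0; first by rewrite add0r; right.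
have [->|y0] := eqVneq y 0; first by rewrite addr0; right.
by right; case/orP: (nu_ultra x0 y0 xy0); rewrite -(ler_int Rt) => h;
  [apply: le_trans hx h | apply: le_trans hy h].
Qed.

Lemma val_geN r x : val_ge r x -> val_ge r (- x).
Proof. by case=> [->|h]; [left; rewrite oppr0|right; rewrite nuN]. Qed.

Lemma val_geB r x y : val_ge r x -> val_ge r y -> val_ge r (x - y).
Proof. by move=> hx /val_geN; apply: val_geD. Qed.

Lemma val_geM a b x y : val_ge a x -> val_ge b y -> val_ge (a + b) (x * y).
Proof.
move=> [->|hx]; first by left; rewrite mul0r.
move=> [->|hy]; first by left; rewrite mulr0.
have [->|x0] := eqVneq x 0; first by left; rewrite mul0r.
have [->|y0] := eqVneq y 0; first by left; rewrite mulr0.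
by right; rewrite nuM // intrD lerD.
Qed.

Lemma val_ge_sum r (I : Type) (s : seq I) (P : pred I) (F : I -> K) :
  (forall i, List.In i s -> P i -> val_ge r (F i)) ->
  val_ge r (\sum_(i <- s | P i) F i).
Proof.
elim: s => [|i s IH] hF; first by rewrite big_nil; left.
rewrite big_cons; case: ifP => Pi; last by apply: IH => j sj; apply: hF; right.
by apply: val_geD; [apply: hF; [left|]|apply: IH => j sj; apply: hF; right].
Qed.

Lemma nu_perturb x y : x != 0 -> val_ge ((nu x)%:~R + 1) (y - x) ->
  y != 0 /\ nu y = nu x.
Proof.
move=> x0 [/eqP|hyx]; first by rewrite subr_eq0 => /eqP ->.
have [/eqP|yx0] := eqVneq (y - x) 0; first by rewrite subr_eq0 => /eqP ->.
have lt_x_yx : (nu x < nu (y - x))%R by rewrite -(ltr_int Rt); lra.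
have y0 : y != 0 by apply: contraTneq lt_x_yx => ->; rewrite sub0r nuN ltxx.
have xy0 : x - y != 0 by rewrite -opprB oppr_eq0.
have := nu_ultra x0 yx0; rewrite addrC subrK => /(_ y0) u1.
have := nu_ultra y0 xy0; rewrite addrC subrK -opprB nuN => /(_ x0) u2.
split => //.
case/orP: u2 => h2; last by have := lt_le_trans lt_x_yx h2; rewrite ltxx.
case/orP: u1 => h1; first by apply/eqP; rewrite eq_le h2 h1.
by have := lt_le_trans lt_x_yx (le_trans h1 h2); rewrite ltxx.
Qed.

Lemma val_ge_vconv s y :
  (forall N : int, exists M, forall m, (M <= m)%N -> val_ge N%:~R (s m - y)) ->
  vconv nu s y.
Proof.
move=> h N; have [M hM] := h N; exists M => m /hM [/eqP|].
  by rewrite subr_eq0 => /eqP ->; left.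
by rewrite ler_int; right.
Qed.

Lemma vconv_subr s y z : vconv nu s y -> vconv nu (fun m => s m - z) (y - z).
Proof.
move=> hc N; have [M hM] := hc N; exists M => m /hM [->|h]; first by left.
by right; rewrite opprB addrA subrK.
Qed.

Lemma vconv_val_ge r s y : vconv nu s y ->
  (exists M0, forall m, (M0 <= m)%N -> val_ge r (s m)) -> val_ge r y.
Proof.
move=> hc [M0 hM0]; have [->|y0] := eqVneq y 0; first exact: val_ge0.
have [M hM] := hc (nu y + 1).
have [<-|close] := hM (maxn M M0) (leq_maxl _ _); first exact: hM0 (leq_maxr _ _).
have [s0 e] : s (maxn M M0) != 0 /\ nu (s (maxn M M0)) = nu y.
  by apply: nu_perturb => //; right; move: close; rewrite -(ler_int Rt) intrD.
case: (hM0 _ (leq_maxr M M0)) => [/eqP|h]; first by rewrite (negbTE s0).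
by right; rewrite -e.
Qed.

Variables (kk : fieldType) (res : K -> kk).
Hypothesis hres : residue_map nu res.

Lemma resD x y : val_ge 0 x -> val_ge 0 y -> res (x + y) = res x + res y.
Proof. by case: hres => + _ _ _ _ => h /OK_val_ge hx /OK_val_ge hy; apply: h. Qed.

Lemma resM x y : val_ge 0 x -> val_ge 0 y -> res (x * y) = res x * res y.
Proof. by case: hres => _ + _ _ _ => h /OK_val_ge hx /OK_val_ge hy; apply: h. Qed.

Lemma res0 : res 0 = 0.
Proof. by apply: (addrI (res 0)); rewrite -resD ?addr0 //; left. Qed.

Lemma res_eq0 x : val_ge 0 x -> res x = 0 <-> val_ge 1 x.
Proof.
case: hres => _ _ _ + _ => h /[dup] /OK_val_ge /h ->.
by rewrite /val_ge (ler_int Rt 1); split; case=> [|h1]; [left|right; lia|left|right; lia].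
Qed.

Lemma res_surj c : exists x, val_ge 0 x /\ res x = c.
Proof. by case: hres => _ _ _ _ /(_ c) [x [/OK_val_ge]]; exists x. Qed.

Lemma res_neq0 x : val_ge 0 x -> res x != 0 <-> x != 0 /\ nu x = 0.
Proof.
move=> x_ge0; split=> [r0|[x0 nu_x0]]; last first.
  apply/eqP => /(res_eq0 x_ge0) [/eqP|]; first by rewrite (negbTE x0).
  by rewrite nu_x0 (ler_int Rt 1).
have x0 : x != 0 by apply: contraNneq r0 => ->; rewrite res0.
split=> //; case: (x_ge0) => [/eqP|]; first by rewrite (negbTE x0).
rewrite ler0z => nu_ge0; suff : ~ (1 <= nu x)%R by lia.
by move=> h; move/eqP: r0; apply; apply/(res_eq0 x_ge0); right; rewrite (ler_int Rt 1).
Qed.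

Lemma res_sum_neq0 (T : Type) (L : seq T) (F : T -> K) :
  (forall x, List.In x L -> val_ge 0 (F x)) -> res (\sum_(x <- L) F x) != 0 ->
  exists2 x, List.In x L & res (F x) != 0.
Proof.
elim: L => [|x L IH] F_ge0; first by rewrite big_nil res0 eqxx.
have L_ge0 y : List.In y L -> val_ge 0 (F y) by move=> Ly; apply: F_ge0; right.
have Fx_ge0 : val_ge 0 (F x) by apply: F_ge0; left.
rewrite big_cons resD //; last by apply: val_ge_sum => y Ly _; apply: L_ge0.
have [Fx0|] := eqVneq (res (F x)) 0; last by exists x => //; left.
by rewrite Fx0 add0r => /IH [// | y Ly Fy0]; exists y => //; right.
Qed.

Variable R : K -> Prop.
Hypotheses (R0 : R 0) (R1 : R 1) (R_OK : forall x, R x -> OK nu x).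
Hypothesis R_dense : forall x N, OK nu x -> exists r, R r /\ vclose nu N x r.

Lemma R_ge0 x : R x -> val_ge 0 x.
Proof. by move/R_OK/OK_val_ge. Qed.

(* Representing residue 0 by 0 makes the p-adic digits below the valuation vanish. *)
Lemma exists_residue_rep x :
  exists r, [/\ R r, val_ge 0 x -> val_ge 1 (x - r) & val_ge 1 x -> r = 0].
Proof.
case: (classic (val_ge 1 x)) => [x_ge1|x_lt1].
  by exists 0; split=> // _; rewrite subr0.
case: (classic (val_ge 0 x)) => [/OK_val_ge x_ge0|]; last by exists 0.
have [r [Rr close]] := R_dense 1 x_ge0.
exists r; split=> // _; case: close => [->|h]; first by rewrite subrr; left.
by right; rewrite (ler_int Rt 1).
Qed.

Definition residue_rep x : K :=
  proj1_sig (constructive_indefinite_description _ (exists_residue_rep x)).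

Lemma residue_repP x :
  [/\ R (residue_rep x), val_ge 0 x -> val_ge 1 (x - residue_rep x)
    & val_ge 1 x -> residue_rep x = 0].
Proof. by rewrite /residue_rep; case: constructive_indefinite_description. Qed.

Fixpoint digit_rem (c : K) (b : nat) : K :=
  if b is b'.+1 then (digit_rem c b' - residue_rep (digit_rem c b')) / p else c.

Definition digit (c : K) (b : nat) : K := residue_rep (digit_rem c b).

Lemma digitR c b : R (digit c b).
Proof. by case: (residue_repP (digit_rem c b)). Qed.

Lemma digit_rem_ge0 c b : val_ge 0 c -> val_ge 0 (digit_rem c b).
Proof.
move=> c_ge0; elim: b => [|b IH] //=.
have p_inv : val_ge (-1) p^-1 by right; rewrite nuV // nu_p.
by case: (residue_repP (digit_rem c b)) => _ /(_ IH) /val_geM /(_ p_inv); rewrite subrr.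
Qed.

Lemma digit_sum c N :
  \sum_(b < N) digit c b * p ^+ b = c - digit_rem c N * p ^+ N.
Proof.
elim: N => [|N IH]; first by rewrite big_ord0 expr0 mulr1 subrr.
by rewrite big_ord_recr /= IH /digit exprSr (mulrC (p ^+ N)) mulrA divfK //; ring.
Qed.

Lemma digit_vconv c :
  val_ge 0 c -> vconv nu (fun N => \sum_(b < N) digit c b * p ^+ b) c.
Proof.
move=> c_ge0; apply: val_ge_vconv => N; exists `|N|%N => m le_Nm.
rewrite digit_sum addrAC subrr add0r; apply: val_geN.
have := val_geM (digit_rem_ge0 m c_ge0) (val_ge_pXz m).
by rewrite add0r -exprnP; apply: val_ge_le; rewrite ler_int; lia.
Qed.

Lemma digit_rem_low (c : K) (b : nat) : c != 0 -> (b%:Z <= nu c)%R ->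
  digit_rem c b = c * p ^ (- b%:Z).
Proof.
move=> c0; elim: b => [|b IH] le_b_nu /=; first by rewrite oppr0 expr0z mulr1.
rewrite IH; last by lia.
case: (residue_repP (c * p ^ (- b%:Z))) => _ _ ->; last first.
  by right; rewrite nuM ?pXz_neq0 // nu_pXz (ler_int Rt 1); lia.
by rewrite subr0 -mulrA -exprN1 -pXzD; congr (_ * p ^ _); lia.
Qed.

Lemma digit_neq0 (c : K) (b : nat) : digit c b != 0 -> c != 0 /\ (nu c <= b%:Z)%R.
Proof.
have [->|c0] := eqVneq c 0.
  have rep0 : residue_rep 0 = 0 by case: (residue_repP 0) => _ _ -> //; left.
  have rem0 b' : digit_rem 0 b' = 0 by elim: b' => //= b' ->; rewrite rep0 subrr mul0r.
  by rewrite /digit rem0 rep0 eqxx.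
move=> digit0; split=> //; case: (leP (nu c) b) => // lt_b_nu.
move: digit0; rewrite /digit (digit_rem_low c0); last by lia.
case: (residue_repP (c * p ^ (- b%:Z))) => _ _ -> //; first by rewrite eqxx.
by right; rewrite nuM ?pXz_neq0 // nu_pXz (ler_int Rt 1); lia.
Qed.

Lemma res_digit_nu c : val_ge 0 c -> c != 0 ->
  res (digit c `|nu c|%N) = res (c * p ^ (- nu c)).
Proof.
move=> c_ge0 c0; have nu_ge0 : (0 <= nu c)%R by case: c_ge0 => [/eqP|]; rewrite ?(negbTE c0) ?ler0z.
have nu_abs : `|nu c|%N = nu c :> int by lia.
have u_ge0 := digit_rem_ge0 `|nu c|%N c_ge0.
rewrite /digit (digit_rem_low c0) nu_abs ?lexx // in u_ge0 *.
case: (residue_repP (c * p ^ (- nu c))) => R_rep /(_ u_ge0) close _.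
have rep_ge0 := R_ge0 R_rep.
set u := c * _ in u_ge0 close *; set r := residue_rep u in R_rep close rep_ge0 *.
have d_ge0 := val_geB u_ge0 rep_ge0.
by rewrite -[in RHS](subrK r u) resD // (proj2 (res_eq0 d_ge0) close) add0r.
Qed.

Lemma res_coef_pX x y (b : nat) : val_ge 0 x -> val_ge (b%:R + 1) (y - x * p ^+ b) ->
  res x = if (y != 0) && (nu y == b) then res (y * p ^ (- nu y)) else 0.
Proof.
move=> x_ge0 close.
have [rx0|/(res_neq0 x_ge0) [x0 nu_x0]] := eqVneq (res x) 0.
  have xp_ge : val_ge (b%:R + 1) (x * p ^+ b).
    by have := val_geM (proj1 (res_eq0 x_ge0) rx0) (val_ge_pXz b); rewrite addrC -exprnP.
  have := val_geD close xp_ge; rewrite subrK rx0 => -[->|y_ge]; first by rewrite eqxx.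
  case: (nu y =P b%:Z) => [nu_yb|]; last by rewrite andbF.
  by move: y_ge; rewrite nu_yb -pmulrn gerDl ler10.
have xp0 : x * p ^+ b != 0 by rewrite mulf_neq0 ?expf_neq0.
have nu_xp : nu (x * p ^+ b) = b by rewrite nuM ?expf_neq0 // nu_x0 nu_pX add0r.
have [y0 nu_y] : y != 0 /\ nu y = nu (x * p ^+ b) by apply: nu_perturb; rewrite // nu_xp -pmulrn.
rewrite y0 nu_y nu_xp eqxx /=.
have -> : y * p ^ (- b%:Z) = x + (y - x * p ^+ b) * p ^ (- b%:Z).
  by rewrite mulrBl -mulrA exprnP -pXzD subrr expr0z mulr1 addrC subrK.
have rest_ge1 : val_ge 1 ((y - x * p ^+ b) * p ^ (- b%:Z)).
  apply: val_ge_le (val_geM close (val_ge_pXz (- b%:Z))).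
  by rewrite intrN -pmulrn addrAC subrr add0r.
have rest_ge0 := val_ge_le ler01 rest_ge1.
by rewrite resD // (proj2 (res_eq0 rest_ge0) rest_ge1) addr0.
Qed.

Lemma term_val_ge x r (b : nat) :
  val_ge 0 x -> (x != 0 -> r <= b%:R) -> val_ge r (x * p ^+ b).
Proof.
move=> x_ge0 le_rb; have [->|x0] := eqVneq x 0; first by rewrite mul0r; left.
by apply: val_ge_le (val_geM x_ge0 (val_ge_pXz b)); rewrite add0r -pmulrn le_rb.
Qed.

Variable n : nat.

Lemma pi_rel_tail r (g : mono n * nat -> K) F a b0 : pi_rel nu p g F ->
  (forall b, b != b0 -> val_ge r (g (a, b) * p ^+ b)) ->
  val_ge r (F a - g (a, b0) * p ^+ b0).
Proof.
move=> hpi tail; apply: (vconv_val_ge (vconv_subr _ (hpi a))).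
exists b0.+1 => m lt_b0m; rewrite (bigD1 (Ordinal lt_b0m)) //= addrAC subrr add0r.
by apply: val_ge_sum => b _ neq; apply: tail; apply: contra neq => /eqP e; apply/eqP/val_inj.
Qed.

Lemma pi_rel_val_ge r (g : mono n * nat -> K) F a : pi_rel nu p g F ->
  (forall b, val_ge r (g (a, b) * p ^+ b)) -> val_ge r (F a).
Proof.
move=> hpi terms; rewrite -(subrK (g (a, 0%N) * p ^+ 0) (F a)).
by apply: val_geD; [apply: pi_rel_tail | apply: terms].
Qed.

Variable w : 'I_n -> Rt.

Section InitialForm.
Variables (g h : mono n * nat -> K) (M : Rt) (T : mono n -> kk) (N : nat).
Hypothesis g_le_M : forall m, g m != 0 -> wt_u w m <= M.
Hypothesis M_attained : (forall m, g m = 0) \/ exists m, g m != 0 /\ wt_u w m = M.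
Hypothesis hE : forall m, h m = if wt_u w m == M then g m else 0.
Hypothesis h_bounded : forall a b, (N <= b)%N -> h (a, b) = 0.
Hypothesis hT : forall a, T a = \sum_(b < N) res (h (a, nat_of_ord b)).

Lemma t_one_at_weight a b0 : wt_u w (a, b0) = M -> T a = res (g (a, b0)).
Proof.
move=> wt_b0; rewrite hT (@big_ord_single _ (fun b => res (h (a, b))) N b0).
- by rewrite hE wt_b0 eqxx.
- move=> b neq; rewrite hE; case: eqP => [wt_b|]; last by rewrite res0.
  exfalso; move/negP: neq; apply; rewrite -(eqr_nat Rt); apply/eqP.
  by move: wt_b wt_b0; rewrite !wt_uE; lra.
- by move=> le_N_b0; rewrite h_bounded ?res0.
Qed.

Lemma t_one_off_weight a : (forall b, wt_u w (a, b) != M) -> T a = 0.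
Proof. by move=> off; rewrite hT big1 // => b _; rewrite hE (negbTE (off b)) res0. Qed.

Lemma t_one_init_u_lead mu : g mu != 0 ->
  (forall m, g m != 0 -> m = mu \/ gt_u w mu m) ->
  T mu.1 = res (g mu) /\ forall a, T a != 0 -> a = mu.1 \/ lex_gt mu.1 a.
Proof.
move=> g_mu0 mu_max; have wt_mu : wt_u w mu = M.
  apply/eqP; rewrite eq_le g_le_M //=.
  case: M_attained => [/(_ mu)/eqP|[m [gm0 <-]]]; first by rewrite (negbTE g_mu0).
  by case: (mu_max m gm0) => [->|[/ltW|[-> _]]].
split; first by move: wt_mu; case: mu {g_mu0 mu_max} => a b; apply: t_one_at_weight.
move=> a Ta0; have [b wt_b] : exists b, wt_u w (a, b) = M.
  apply: NNPP => off; move/eqP: Ta0; apply; apply: t_one_off_weight => b.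
  by apply/eqP => wt_b; apply: off; exists b.
have gab0 : g (a, b) != 0.
  by apply: contraNneq Ta0; rewrite (t_one_at_weight wt_b) => ->; rewrite res0.
case: (mu_max _ gab0) => [<-|[|[_ [|[-> _]]]]]; [by left | | by right | by left].
by rewrite wt_b wt_mu ltxx.
Qed.

Variable F : mono n -> K.
Hypotheses (g_R : forall m, R (g m)) (g_pi : pi_rel nu p g F).

Lemma init_u_pi_val_ge a : val_ge 0 (F a) /\ val_ge (wdot w a - M) (F a).
Proof.
have g_ge0 m : val_ge 0 (g m) by apply: R_ge0.
split; apply: pi_rel_val_ge g_pi _ => b; apply: term_val_ge => //.
by move/g_le_M; rewrite wt_uE; lra.
Qed.

Lemma t_one_init_uE a : T a =
  if (F a != 0) && (wdot w a - (nu (F a))%:~R == M) then res (F a * p ^ (- nu (F a))) else 0.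
Proof.
have [F_ge0 _] := init_u_pi_val_ge a.
case: (classic (exists b0 : nat, wt_u w (a, b0) = M)) => [[b0 wt_b0]|off]; last first.
  rewrite t_one_off_weight => [|b]; last by apply/eqP => wt_b; apply: off; exists b.
  case: (F a =P 0) => //= /eqP Fa0; case: eqP => // wt_F; exfalso; apply: off.
  have nu_ge0 : (0 <= nu (F a))%R by case: F_ge0 => [/eqP|]; rewrite ?(negbTE Fa0) ?ler0z.
  by exists `|nu (F a)|%N; rewrite wt_uE pmulrn gez0_abs.
have tail : val_ge (b0%:R + 1) (F a - g (a, b0) * p ^+ b0).
  apply: pi_rel_tail g_pi _ => b neq; apply: term_val_ge; first exact: R_ge0.
  move/g_le_M; rewrite -wt_b0 !wt_uE => le_wt.
  have : (b0 <= b)%N by rewrite -(ler_nat Rt); lra.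
  by rewrite leq_eqVlt eq_sym (negbTE neq) /= -(ler_nat Rt) -natr1.
rewrite (t_one_at_weight wt_b0) (res_coef_pX (R_ge0 (g_R _)) tail).
suff -> : (nu (F a) == b0) = (wdot w a - (nu (F a))%:~R == M) by [].
by rewrite -wt_b0 wt_uE -(eqr_int Rt) -pmulrn; apply/eqP/eqP => ?; lra.
Qed.

Lemma init_nu_t_one_init_u : (forall a, T a = 0) \/ init_nu nu p res w F T.
Proof.
case: (classic (forall a, T a = 0)) => [|T_neq0]; [by left | right; exists M].
split=> [a Fa0|]; first by case: (init_u_pi_val_ge a) => _ [/eqP|]; [rewrite (negbTE Fa0) | lra].
split; last exact: t_one_init_uE.
right; have [a Ta0] := not_all_ex_not _ _ T_neq0.
by exists a; move: Ta0; rewrite t_one_init_uE; case: (F a =P 0) => //= /eqP Fa0; case: eqP.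
Qed.
End InitialForm.

Lemma init_nu_coef (f : mono n -> K) (F : mono n -> kk) Mx b (e : int) :
  (forall a, f a != 0 -> wdot w a - (nu (f a))%:~R <= Mx) ->
  (forall a, F a = if (f a != 0) && (wdot w a - (nu (f a))%:~R == Mx)
                   then res (f a * p ^ (- nu (f a))) else 0) ->
  e%:~R = Mx - wdot w b -> val_ge 0 (f b * p ^ e) /\ res (f b * p ^ e) = F b.
Proof.
move=> f_le FE he; rewrite FE.
have [->|fb0] := eqVneq (f b) 0; first by rewrite mul0r res0; split; [left|].
have fb_ge := f_le b fb0.
have ge0 : val_ge 0 (f b * p ^ e).
  by apply: val_ge_le (val_geM (val_ge_nu _) (val_ge_pXz e)); lra.
split=> //=; case: eqP => [wt_eq|wt_ne].
  suff -> : e = - nu (f b) by [].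
  by apply/eqP; rewrite -(eqr_int Rt) intrN; apply/eqP; lra.
have lt : wdot w b - (nu (f b))%:~R < Mx by rewrite lt_neqAle fb_ge andbT; apply/eqP.
have : ((0 : int)%:~R : Rt) < (nu (f b) + e)%:~R by rewrite intrD; lra.
rewrite ltr_int => nu_gt0; apply/(res_eq0 ge0); right.
by rewrite nuM ?pXz_neq0 // nu_pXz (ler_int Rt 1); lia.
Qed.

Lemma is_lead_R (T : eqType) (gt : T -> T -> Prop) (g l : T -> K) :
  (forall m, R (g m)) -> is_lead gt g l -> forall m, R (l m).
Proof. by move=> g_R [[_ l0]|[m0 [_ [_ lE]]]] m; [rewrite l0 | rewrite lE; case: eqP]. Qed.

Lemma lead_ideal_res_neq0 (G : seq (mono n * nat -> K)) l ms :
  (forall g, List.In g G -> forall m, R (g m)) ->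
  ideal_gen (@tmdiv n) (@tmsub n) R
    (fun l => exists g, List.In g G /\ is_lead (gt_u w) g l) l ->
  res (l ms) != 0 ->
  exists g m0, [/\ List.In g G, tmdiv m0 ms, res (g m0) != 0 &
    forall m, g m != 0 -> m = m0 \/ gt_u w m0 m].
Proof.
move=> G_R [L [L_lead l_sum]]; rewrite l_sum => /res_sum_neq0 [x Lx|x Lx].
  have [Rx [g [Gg g_lead]]] := L_lead x Lx; rewrite /tmul; case: ifP => _; last by left.
  apply: val_ge_le (val_geM (R_ge0 Rx) (R_ge0 (is_lead_R (G_R g Gg) g_lead _))).
  by rewrite addr0.
have [Rx [g [Gg g_lead]]] := L_lead x Lx.
rewrite /tmul; case: ifP => [div|]; last by rewrite res0 eqxx.
have l_ge0 := R_ge0 (is_lead_R (G_R g Gg) g_lead (tmsub ms x.1.2)).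
have Rx_ge0 := R_ge0 Rx.
rewrite resM // mulf_eq0 negb_or => /andP [_].
case: g_lead => [[_ ->]|[m0 [gm0 [m0_max ->]]]]; first by rewrite res0 eqxx.
case: (tmsub ms x.1.2 =P m0) => [e_m0 res_g0|_]; last by rewrite res0 eqxx.
by exists g, m0; split=> //; rewrite -e_m0 /tmdiv mdiv_msub leq_subr.
Qed.

Section Ideal.
Variable I : (mono n -> K) -> Prop.
Hypotheses (I_fsupp : forall f, I f -> fsupp f) (I0 : I (fun _ => 0)).
Hypothesis I_add : forall f f', I f -> I f' -> I (fun a => f a + f' a).
Hypothesis I_tmul : forall c a f, I f -> I (tmul (@mdiv n) (@msub n) c a f).

Lemma I_scale c f : I f -> I (fun a => c * f a).
Proof.
move/(I_tmul c mono0); congr I; apply: functional_extensionality => a.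
by rewrite /tmul mdiv0 msub0.
Qed.

(* The lift is p^z ch x^m f with res ch = c and z = Mx + w.m - W; when this z is not an
   integer, x^m in_(nu,w)(f) vanishes wherever the level w.a - W is an integer, and the lift
   is 0. *)
Lemma init_nu_term_lift c m f F W : I f -> init_nu nu p res w f F ->
  exists H, [/\ I H, forall a, val_ge (wdot w a - W) (H a) &
    forall a (E : int), E%:~R = wdot w a - W ->
      res (H a * p ^ (- E)) = tmul (@mdiv n) (@msub n) c m F a].
Proof.
move=> If [Mx [f_le [_ FE]]].
have f_ge b : val_ge (wdot w b - Mx) (f b).
  by have [fb0|/f_le] := eqVneq (f b) 0; [left | right; lra].
case: (classic (exists z : int, z%:~R = Mx + wdot w m - W)) => [[z hz]|no_z].
  have [ch [ch_ge0 <-]] := res_surj c.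
  exists (tmul (@mdiv n) (@msub n) (p ^ z * ch) m f); split=> [|a|a E hE]; first exact: I_tmul.
    rewrite /tmul; case: ifP => [m_a|_]; last exact: val_ge0.
    apply: val_ge_le (val_geM (val_geM (val_ge_pXz z) ch_ge0) (f_ge _)).
    by rewrite hz (wdot_msub m_a); lra.
  rewrite /tmul; case: ifP => [m_a|_]; last by rewrite mul0r res0.
  have e_eq : (z - E)%:~R = Mx - wdot w (msub a m).
    by rewrite intrB hz hE (wdot_msub m_a); lra.
  have [fb_ge0 <-] := init_nu_coef f_le FE e_eq.
  by rewrite -resM // pXzD; congr res; ring.
exists (fun _ => 0); split=> [//|a|a E hE]; first exact: val_ge0.
rewrite mul0r res0 /tmul; case: ifP => // m_a; rewrite FE.
case: ifP => [/andP [_ /eqP wt_b]|]; last by rewrite mulr0.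
exfalso; apply: no_z; exists (E - nu (f (msub a m))).
by rewrite intrB hE (wdot_msub m_a); lra.
Qed.

Lemma init_nu_ideal_lift (L : seq (kk * mono n * (mono n -> kk))) W :
  (forall x, List.In x L -> exists f, I f /\ init_nu nu p res w f x.2) ->
  exists H, [/\ I H, forall a, val_ge (wdot w a - W) (H a) &
    forall a (E : int), E%:~R = wdot w a - W ->
      res (H a * p ^ (- E)) = \sum_(x <- L) tmul (@mdiv n) (@msub n) x.1.1 x.1.2 x.2 a].
Proof.
elim: L => [|[[c m] F] L IH] L_init.
  by exists (fun _ => 0); split=> [//|a|a E _]; [exact: val_ge0 | rewrite mul0r res0 big_nil].
have [H1 [IH1 H1_ge H1_res]] := IH (fun x Lx => L_init x (or_intror Lx)).
have [f [If f_init]] := L_init _ (or_introl erefl).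
have [H2 [IH2 H2_ge H2_res]] := init_nu_term_lift c m W If f_init.
exists (fun a => H2 a + H1 a); split=> [|a|a E hE]; first exact: I_add.
  exact: val_geD.
have scaled_ge0 H' : (forall a, val_ge (wdot w a - W) (H' a)) -> val_ge 0 (H' a * p ^ (- E)).
  move=> H'_ge; apply: val_ge_le (val_geM (H'_ge a) (val_ge_pXz (- E))).
  by rewrite intrN hE; lra.
have H1E_ge0 := scaled_ge0 _ H1_ge; have H2E_ge0 := scaled_ge0 _ H2_ge.
by rewrite mulrDl resD // big_cons H2_res // H1_res.
Qed.

Lemma exists_integral_scaling H : I H -> exists k : nat, forall a, val_ge 0 (p ^+ k * H a).
Proof.
move=> IH; have [s H_supp] := I_fsupp IH.
exists (\max_(a <- s) `|nu (H a)|)%N => a.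
have [->|Ha0] := eqVneq (H a) 0; first by rewrite mulr0; left.
have a_s : a \in s by apply: contraT => /H_supp /eqP; rewrite (negbTE Ha0).
have := @leq_bigmax_seq _ s xpredT (fun a => `|nu (H a)|%N) a a_s isT.
by right; rewrite nuM ?expf_neq0 // nu_pX ler0z; lia.
Qed.

Definition digit_lift (c : mono n -> K) (m : mono n * nat) : K := digit (c m.1) m.2.

Lemma digit_lift_pi_pre c : I c -> (forall a, val_ge 0 (c a)) -> pi_pre nu p R I (digit_lift c).
Proof.
move=> Ic c_ge0; have [s c_supp] := I_fsupp Ic.
split; last by exists c; split=> // a; exact: digit_vconv (c_ge0 a).
split=> [m|]; first exact: digitR.
exists s => a b /c_supp ca0; apply/eqP; apply: contraT => /digit_neq0 [].
by rewrite ca0 eqxx.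
Qed.

Section LeadingLift.
Variables (H : mono n -> K) (astar : mono n) (k : nat).
Hypothesis H_ge : forall a, val_ge (wdot w a - wdot w astar) (H a).
Hypothesis H_top : forall a, H a != 0 ->
  (nu (H a))%:~R = wdot w a - wdot w astar -> a = astar \/ lex_gt astar a.
Hypotheses (H_star0 : H astar != 0) (nu_H_star : nu (H astar) = 0).

Lemma digit_lift_lead m : digit_lift (fun a => p ^+ k * H a) m != 0 ->
  m = (astar, k) \/ gt_u w (astar, k) m.
Proof.
case: m => a b /digit_neq0 [/= ca0 nu_le_b].
have Ha0 : H a != 0 by apply: contraNneq ca0 => ->; rewrite mulr0.
rewrite nuM ?expf_neq0 // nu_pX in nu_le_b.
have le_b : k%:R + (nu (H a))%:~R <= b%:R :> Rt.
  by move: nu_le_b; rewrite -(ler_int Rt) intrD -!pmulrn.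
have H_lb : wdot w a - wdot w astar <= (nu (H a))%:~R.
  by case: (H_ge a) => [/eqP|]; rewrite ?(negbTE Ha0).
case: (ltP (wt_u w (a, b)) (wt_u w (astar, k))) => [|ge_wt]; first by right; left.
move: ge_wt; rewrite !wt_uE => ge_wt.
have nu_Ha : (nu (H a))%:~R = wdot w a - wdot w astar by lra.
case: (H_top Ha0 nu_Ha) => [ea|lex]; last by right; right; split; [rewrite !wt_uE; lra | left].
subst a; left; congr (_, _); apply/eqP; rewrite -(eqr_nat Rt); apply/eqP.
by move: le_b; rewrite nu_H_star; lra.
Qed.

Lemma res_digit_lift_star :
  res (digit_lift (fun a => p ^+ k * H a) (astar, k)) = res (H astar).
Proof.
have c0 : p ^+ k * H astar != 0 by rewrite mulf_neq0 ?expf_neq0.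
have nu_c : nu (p ^+ k * H astar) = k by rewrite nuM ?expf_neq0 // nu_pX nu_H_star addr0.
have c_ge0 : val_ge 0 (p ^+ k * H astar) by right; rewrite nu_c -pmulrn ler0n.
rewrite /digit_lift /=; have := res_digit_nu c_ge0 c0; rewrite nu_c /= => ->.
by rewrite mulrAC -[p ^+ k]/(p ^ k%:Z) -pXzD subrr expr0z mul1r.
Qed.
End LeadingLift.

Lemma init_nu_ideal_unit_lift f astar : init_nu_ideal nu p res w I f -> f astar != 0 ->
  (forall mu, f mu != 0 -> mu = astar \/ lex_gt astar mu) ->
  exists g ms, [/\ pi_pre nu p R I g, ms.1 = astar, res (g ms) = f astar &
    forall m, g m != 0 -> m = ms \/ gt_u w ms m].
Proof.
move=> [L [L_init f_sum]] f_star0 f_top.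
have [H [IH H_ge H_res]] := init_nu_ideal_lift (wdot w astar) (fun x Lx => proj2 (L_init x Lx)).
have {}H_res a E : E%:~R = wdot w a - wdot w astar -> res (H a * p ^ (- E)) = f a.
  by move/H_res ->; rewrite f_sum.
have H_top a : H a != 0 -> (nu (H a))%:~R = wdot w a - wdot w astar ->
    a = astar \/ lex_gt astar a.
  move=> Ha0 nu_Ha; apply: f_top; rewrite -(H_res a _ nu_Ha).
  have nu_0 : nu (H a * p ^ (- nu (H a))) = 0 by rewrite nuM ?pXz_neq0 // nu_pXz subrr.
  by apply/res_neq0; [right; rewrite nu_0 | rewrite mulf_neq0 ?pXz_neq0].
have res_star : res (H astar) = f astar.
  by rewrite -(H_res astar 0) ?subrr // oppr0 expr0z mulr1.
have [H_star0 nu_H_star] : H astar != 0 /\ nu (H astar) = 0.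
  by apply/res_neq0; [have := H_ge astar; rewrite subrr | rewrite res_star].
have [k Hk_ge0] := exists_integral_scaling IH.
exists (digit_lift (fun a => p ^+ k * H a)), (astar, k); split=> //.
- by apply: digit_lift_pi_pre => //; apply: I_scale.
- by rewrite res_digit_lift_star.
- exact: digit_lift_lead.
Qed.

Section StandardBasis.
Variables (G : seq (mono n * nat -> K)) (G' : seq (mono n -> kk)).
Hypothesis hG : std_basis (@tmdiv n) (@tmsub n) R (gt_u w) (pi_pre nu p R I) G.
Hypothesis hGG' :
  List.Forall2 (fun g F => exists h, init_u w g h /\ t_one res h F) G G'.

Lemma G_R g : List.In g G -> forall m, R (g m).
Proof. by case/(proj1 hG) => -[]. Qed.

Lemma t_one_init_u_mem g' : List.In g' G' -> init_nu_ideal nu p res w I g'.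
Proof.
case/(Forall2_In_r hGG') => g Gg [h [[M [g_le [_ hE]]] [N [h_bd hT]]]].
have [_ [F [g_pi IF]]] := proj1 hG g Gg.
case: (init_nu_t_one_init_u g_le hE h_bd hT (G_R Gg) g_pi) => [T0|g'_init].
  by exists [::]; split=> // m; rewrite big_nil T0.
exists [:: (1, mono0, g')]; split=> [x [<-|//]|m]; first by split=> //; exists F.
by rewrite big_cons big_nil addr0 /tmul mdiv0 msub0 mul1r.
Qed.

Lemma init_nu_ideal_lead_div f astar : init_nu_ideal nu p res w I f -> f astar != 0 ->
  (forall mu, f mu != 0 -> mu = astar \/ lex_gt astar mu) ->
  exists g' ai e, [/\ List.In g' G', e != 0, mdiv ai astar &
    is_lead (@lex_gt n) g' (fun mu => if mu == ai then e else 0)].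
Proof.
move=> f_init f_star0 f_top.
have [g [ms [g_pi ms1 g_res g_max]]] := init_nu_ideal_unit_lift f_init f_star0 f_top.
have g_ms0 : g ms != 0 by apply: contraNneq f_star0; rewrite -g_res => ->; rewrite res0.
pose l m := if m == ms then g ms else 0.
have l_lead : ideal_gen (@tmdiv n) (@tmsub n) R
    (fun l => exists f, pi_pre nu p R I f /\ is_lead (gt_u w) f l) l.
  exists [:: (1, (mono0, 0%N), l)]; split=> [x [<-|//]|m].
    by split=> //; exists g; split=> //; right; exists ms.
  by rewrite big_cons big_nil addr0 /tmul /tmdiv mdiv0 /tmsub msub0 subn0 mul1r -surjective_pairing.
have l_ms : res (l ms) != 0 by rewrite /l eqxx g_res.
have [gi [m0 [Ggi div res_gi G_max]]] := lead_ideal_res_neq0 G_R ((proj2 hG l).2 l_lead) l_ms.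
have [g' G'g' [h [[M [g_le [M_att hE]]] [N [h_bd hT]]]]] := Forall2_In_l hGG' Ggi.
have gi0 : gi m0 != 0 by apply: contraNneq res_gi => ->; rewrite res0.
have [T_m0 T_top] := t_one_init_u_lead g_le M_att hE h_bd hT gi0 G_max.
exists g', m0.1, (res (gi m0)); split=> //; first by rewrite -ms1; case/andP: div.
by right; exists m0.1; rewrite T_m0; split=> //; split=> // m'; rewrite -T_m0.
Qed.

Lemma std_basis_t_one_init_u :
  std_basis (@mdiv n) (@msub n) (fun _ => True) (@lex_gt n) (init_nu_ideal nu p res w I) G'.
Proof.
split=> [|h]; first exact: t_one_init_u_mem.
split.
  apply: ideal_gen_sub => l [g' [G'g' g'_lead]].
  by exists g'; split=> //; apply: t_one_init_u_mem.
apply: ideal_gen_subst => c m l _ [f [f_init [[_ l0]|[astar [f_star0 [f_top lE]]]]]].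
  exists [::]; split=> // m'; rewrite big_nil /tmul; case: ifP => // _.
  by rewrite l0 mulr0.
have [g' [ai [e [G'g' e0 ai_astar g'_lead]]]] := init_nu_ideal_lead_div f_init f_star0 f_top.
exists [:: (c * f astar / e, madd m (msub astar ai), fun mu => if mu == ai then e else 0)].
split=> [x [<-|//]|m']; first by split=> //; exists g'.
have -> : l = fun b => if b == astar then f astar else 0 by apply: functional_extensionality.
by rewrite big_cons big_nil addr0 /= !tmul_single madd_msubA // divfK.
Qed.
End StandardBasis.
End Ideal.
End Valuation.

Theorem corollary3p9
  (K : fieldType) (nu : K -> int) (p : K)
  (kk : fieldType) (res : K -> kk)
  (R : K -> Prop)
  (Rt : realType) (n : nat) (w : 'I_n -> Rt)
  (I : (mono n -> K) -> Prop)
  (G : seq (mono n * nat -> K))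
  (hK : complete_dvf nu p)
  (hres : residue_map nu res)
  (hR : good_subring nu p R)
  (hI : homog_ideal I)
  (hG : std_basis (@tmdiv n) (@tmsub n) R (gt_u w) (pi_pre nu p R I) G)
  (hGred : init_reduced R G) :
  forall G' : seq (mono n -> kk),
    List.Forall2 (fun g F => exists h, init_u w g h /\ t_one res h F) G G' ->
    std_basis (@mdiv n) (@msub n) (fun _ => True) (@lex_gt n)
              (init_nu_ideal nu p res w I) G'.
Proof.
move=> G' hGG'.
case: hK => nuM nu_ultra [p_neq0 nu_p] _.
case: hR => [[R0 [R1 _]] [R_OK _] R_dense _].
case: hI => [[I_fsupp I0 I_add I_tmul] _].
exact: (std_basis_t_one_init_u nuM nu_ultra p_neq0 nu_p hres R0 R1 R_OK R_dense
  I_fsupp I0 I_add I_tmul hG hGG').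
Qed.
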